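(* Let $n\ge1$ and let $F,G$ be continuous functions with $0<F(r),G(r)<+\infty$ on an interval $(r_i^-,r_i^+)\subset(0,+\infty)$. Set $a(r)=r^n\sqrt{G(r)/F(r)}$ and $b(r)=r^n\sqrt{F(r)/G(r)}$. If $r_i^->0$, the three statements $\int_{r_i^-}\frac{dr}{b(r)}=+\infty$, $\int_{r_i^-}a(r)\,dr=+\infty$ and $\int_{r_i^-}\sqrt{a(r)/b(r)}\,dr=+\infty$ are equivalent. If $r_i^+$ is finite, the three statements $\int^{r_i^+}\frac{dr}{b(r)}=+\infty$, $\int^{r_i^+}a(r)\,dr=+\infty$ and $\int^{r_i^+}\sqrt{a(r)/b(r)}\,dr=+\infty$ are equivalent.
   Context: Notation: $\int_{r_0}f$ means $\int_{r_0}^{r_0+\varepsilon}f$ and $\int^{r_1}f$ means $\int_{r_1-\varepsilon}^{r_1}f$ for small $\varepsilon>0$. *)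

From HB Require Import structures.
From mathcomp Require Import all_boot all_order all_algebra.
From mathcomp Require Import all_classical all_reals all_analysis.
Set Implicit Arguments. Unset Strict Implicit. Unset Printing Implicit Defensive.
Import Order.TTheory GRing.Theory Num.Theory.
Import numFieldNormedType.Exports.
Local Open Scope classical_set_scope.
Local Open Scope ring_scope.

Definition afun (R : realType) (n : nat) (F G : R -> R) (r : R) : R :=
  r ^+ n * Num.sqrt (G r / F r).
Definition bfun (R : realType) (n : nat) (F G : R -> R) (r : R) : R :=
  r ^+ n * Num.sqrt (F r / G r).

(* \int_{r0} f = +oo : for every small eps > 0,
   \int_{r0}^{r0+eps} f = +oo  (Lebesgue integral of the nonnegative f) *)
Definition int_right_infty (R : realType) (f : R -> R) (r0 : R) : Prop :=
  \forall e \near 0^'+,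
    let I : set R := `]r0, (r0 + e)%R[%classic in
    (\int[lebesgue_measure]_(x in I) (f x)%:E = +oo)%E.

(* \int^{r1} f = +oo : for every small eps > 0,
   \int_{r1-eps}^{r1} f = +oo *)
Definition int_left_infty (R : realType) (f : R -> R) (r1 : R) : Prop :=
  \forall e \near 0^'+,
    let I : set R := `](r1 - e)%R, r1[%classic in
    (\int[lebesgue_measure]_(x in I) (f x)%:E = +oo)%E.

From HB Require Import structures.
From mathcomp Require Import all_boot all_order all_algebra.
From mathcomp Require Import all_classical all_reals all_analysis.
From mathcomp Require Import measurable_realfun.
Import Order.TTheory GRing.Theory Num.Theory.
Import numFieldNormedType.Exports.
Local Open Scope classical_set_scope.
Local Open Scope ring_scope.

(* On (0, oo) one has 1/b = r^-n s, a = r^n s and sqrt(a/b) = s, where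
   s = sqrt(G/F).  Near an endpoint r0 > 0 the factors r^n and r^-n are
   bounded above and below by positive constants, so multiplying the
   nonnegative integrand s by them does not affect whether its integral
   diverges. *)

Section integral_pinfty_comparison.
Context {d : measure_display} {T : measurableType d} {R : realType}.
Context (mu : {measure set T -> \bar R}) {D : set T}.
Hypothesis mD : measurable D.

Lemma integral_pinfty_le (c : R) (f g : T -> R) : 0 < c ->
  measurable_fun D f -> measurable_fun D g ->
  (forall x, D x -> 0 <= f x <= c * g x) ->
  (\int[mu]_(x in D) (f x)%:E = +oo)%E -> (\int[mu]_(x in D) (g x)%:E = +oo)%E.
Proof.
move=> c0 mf mg fg fD; apply/eqP; rewrite eq_le leey /=.
have : (\int[mu]_(x in D) (f x)%:E <= c%:E * \int[mu]_(x in D) (g x)%:E)%E.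
  rewrite -ge0_integralZl_EFin ?(ltW c0) //; last first.
  - exact/measurable_EFinP.
  - move=> x Dx; rewrite lee_fin -(pmulr_rge0 _ c0).
    by have /andP[f0 fg'] := fg x Dx; exact: le_trans fg'.
  apply: ge0_le_integral => //.
  - by move=> x Dx; rewrite lee_fin; case/andP: (fg x Dx).
  - exact/measurable_EFinP.
  - by apply/measurable_EFinP/measurable_funM => //; exact: measurable_cst.
  - by move=> x Dx; rewrite lee_fin; case/andP: (fg x Dx).
rewrite fD leye_eq.
by case: (\int[mu]_(x in D) (g x)%:E)%E => //; rewrite gt0_muleNy.
Qed.

Lemma integral_pinfty_weightM (u w : T -> R) (c1 c2 : R) : 0 < c1 -> 0 < c2 ->
  measurable_fun D u -> measurable_fun D (w \* u) ->
  (forall x, D x -> 0 <= u x /\ c1 <= w x <= c2) ->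
  (\int[mu]_(x in D) (w x * u x)%:E = +oo)%E <->
  (\int[mu]_(x in D) (u x)%:E = +oo)%E.
Proof.
move=> c10 c20 mu_ mwu hb; split.
- apply: (integral_pinfty_le c2) => // x Dx.
  have [u0 /andP[c1w wc2]] := hb x Dx.
  by rewrite mulr_ge0 ?ler_wpM2r // (le_trans (ltW c10) c1w).
- apply: (integral_pinfty_le c1^-1); rewrite ?invr_gt0 // => x Dx.
  have [u0 /andP[c1w _]] := hb x Dx.
  by rewrite u0 mulrA ler_peMl // ler_pdivlMl // mulr1.
Qed.

End integral_pinfty_comparison.

Lemma filter_tfae3 {T : Type} {F : set_system T} (Q : T -> Prop)
    {P1 P2 P3 : T -> Prop} :
  Filter F -> F Q -> (forall x, Q x -> [<-> P1 x; P2 x; P3 x]) ->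
  [<-> F P1; F P2; F P3].
Proof.
move=> FF FQ h; tfae => FP; apply: filterS2 FQ FP => x Qx.
- by move/(h x Qx 0%N 1%N).
- by move/(h x Qx 1%N 2%N).
- by move/(h x Qx 2%N 0%N).
Qed.

Section power_weights.
Context {R : realType} (n : nat) (lo hi : R) (u : R -> R).
Hypotheses (lo_gt0 : 0 < lo) (lo_lt_hi : lo < hi).
Local Notation I := `]lo, hi[%classic.
Hypotheses (u_ge0 : forall x, I x -> 0 <= u x) (u_cont : {in I, continuous u}).
Local Notation mu := (@lebesgue_measure R).

Let mI : measurable I. Proof. exact: open_measurable (interval_open _ _). Qed.

Let itv_gt0 x : I x -> 0 < x.
Proof. by rewrite /= in_itv /= => /andP[/(lt_trans lo_gt0)]. Qed.

Let exprn_itv x : I x -> lo ^+ n <= x ^+ n <= hi ^+ n.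
Proof.
move=> /[dup] /itv_gt0 x0; rewrite /= in_itv /= => /andP[lox xhi].
by rewrite !lerXn2r ?nnegrE ?ltW // (lt_trans x0).
Qed.

Let measurable_cont (f : R -> R) : {in I, continuous f} -> measurable_fun I f.
Proof. exact: open_continuous_measurable_fun (interval_open _ _). Qed.

Let measurable_weightM (w : R -> R) : {in I, continuous w} ->
  measurable_fun I (w \* u).
Proof.
move=> cw; apply: measurable_cont => x xI.
exact: continuousM (cw x xI) (u_cont x xI).
Qed.

Let lon_gt0 : 0 < lo ^+ n. Proof. exact: exprn_gt0. Qed.
Let hin_gt0 : 0 < hi ^+ n.
Proof. by rewrite exprn_gt0 // (lt_trans lo_gt0). Qed.

Lemma integral_pinfty_exprnM :
  (\int[mu]_(x in I) (x ^+ n * u x)%:E = +oo)%E <->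
  (\int[mu]_(x in I) (u x)%:E = +oo)%E.
Proof.
apply: (integral_pinfty_weightM mu mI u (fun x => x ^+ n) _ _ lon_gt0 hin_gt0).
- exact: measurable_cont.
- by apply: measurable_weightM => x _; exact: exprn_continuous.
- by move=> x xI; split; [exact: u_ge0|exact: exprn_itv].
Qed.

Lemma integral_pinfty_exprnVM :
  (\int[mu]_(x in I) ((x ^+ n)^-1 * u x)%:E = +oo)%E <->
  (\int[mu]_(x in I) (u x)%:E = +oo)%E.
Proof.
apply: (integral_pinfty_weightM mu mI u (fun x => (x ^+ n)^-1)
  ((hi ^+ n)^-1) ((lo ^+ n)^-1)); rewrite ?invr_gt0 //.
- exact: measurable_cont.
- apply: measurable_weightM => x; rewrite inE => /itv_gt0 x0.
  apply: (continuousV (s := fun x : R => x ^+ n)); last exact: exprn_continuous.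
  by rewrite expf_neq0 // gt_eqF.
- move=> x xI; have /andP[lox xhi] := exprn_itv _ xI; split; first exact: u_ge0.
  by rewrite !lef_pV2 ?posrE ?lox ?xhi // exprn_gt0 // (itv_gt0 _ xI).
Qed.

End power_weights.

Lemma sqrtr_div_continuous {R : realType} (F G : R -> R) (r : R) : F r != 0 ->
  {for r, continuous F} -> {for r, continuous G} ->
  {for r, continuous (fun x => Num.sqrt (G x / F x))}.
Proof.
move=> F0 cF cG; apply: (continuous_comp (f := fun x => G x / F x)).
  exact/continuousM/continuousV.
exact: sqrt_continuous.
Qed.

Section radial_integrals.
Context {R : realType} (n : nat) (F G : R -> R).
Local Notation mu := (@lebesgue_measure R).
Local Notation s r := (Num.sqrt (G r / F r)).

Lemma bfunVE r : 0 < F r -> 0 < G r -> (bfun n F G r)^-1 = (r ^+ n)^-1 * s r.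
Proof.
by move=> F0 G0; rewrite /bfun invfM -sqrtrV ?invf_div // divr_ge0 // ltW.
Qed.

Lemma sqrt_afun_bfunE r : 0 < r -> 0 < F r -> 0 < G r ->
  Num.sqrt (afun n F G r / bfun n F G r) = s r.
Proof.
move=> r0 F0 G0; have rn : r ^+ n != 0 by rewrite expf_neq0 // gt_eqF.
rewrite /afun -[_ / _]/(_ * _) bfunVE // mulrACA mulfV // mul1r -expr2.
by rewrite sqrtr_sqr ger0_norm ?sqrtr_ge0.
Qed.

Definition pos_continuous_at r :=
  [/\ 0 < F r, 0 < G r, {for r, continuous F} & {for r, continuous G}].

Lemma integral_pinfty_tfae (lo hi : R) : 0 < lo -> lo < hi ->
  (forall r, lo < r < hi -> pos_continuous_at r) ->
  let I := `]lo, hi[%classic in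
  [<-> (\int[mu]_(x in I) ((bfun n F G x)^-1)%:E = +oo)%E;
       (\int[mu]_(x in I) (afun n F G x)%:E = +oo)%E;
       (\int[mu]_(x in I) (Num.sqrt (afun n F G x / bfun n F G x))%:E = +oo)%E].
Proof.
move=> lo0 lohi hpos I.
have memI r : I r -> 0 < r /\ pos_continuous_at r.
  rewrite /I /= in_itv /= => /andP[lor rhi].
  by split; [exact: lt_trans lor|exact/hpos/andP].
have s0 r : I r -> 0 <= s r by move=> _; exact: sqrtr_ge0.
have cs : {in I, continuous (fun r => s r)}.
  move=> r; rewrite inE => /memI[_ [F0 _ cF cG]].
  by apply: sqrtr_div_continuous; rewrite ?gt_eqF.
have bE : (\int[mu]_(x in I) ((bfun n F G x)^-1)%:E =
    \int[mu]_(x in I) ((x ^+ n)^-1 * s x)%:E)%E.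
  apply: eq_integral => x; rewrite inE => /memI[_ [F0 G0 _ _]].
  by rewrite bfunVE.
have sqE : (\int[mu]_(x in I) (Num.sqrt (afun n F G x / bfun n F G x))%:E =
    \int[mu]_(x in I) (s x)%:E)%E.
  apply: eq_integral => x; rewrite inE => /memI[x0 [F0 G0 _ _]].
  by rewrite sqrt_afun_bfunE.
have bV := integral_pinfty_exprnVM n _ _ _ lo0 lohi s0 cs.
have aM := integral_pinfty_exprnM n _ _ _ lo0 lohi s0 cs.
by rewrite bE sqE; tfae => [/bV/aM|/aM|/bV].
Qed.

Lemma int_right_infty_tfae (r0 : R) (r1 : \bar R) : 0 < r0 -> (r0%:E < r1)%E ->
  (forall r, (r0%:E < r%:E < r1)%E -> pos_continuous_at r) ->
  [<-> int_right_infty (fun r => (bfun n F G r)^-1) r0;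
       int_right_infty (afun n F G) r0;
       int_right_infty (fun r => Num.sqrt (afun n F G r / bfun n F G r)) r0].
Proof.
move=> r00 r01 hr.
apply: (filter_tfae3 (fun e => 0 < e /\ ((r0 + e)%:E < r1)%E)).
- near=> e; split; first by near: e; exact: nbhs_right_gt.
  near: e; case: r1 r01 {hr} => [p||] //= r0p.
    apply: filterS (nbhs_right_lt (_ : 0 < p - r0)).
      by move=> e; rewrite lte_fin ltrBrDl.
    by rewrite subr_gt0 -lte_fin.
  by apply: filterS (nbhs_right_gt 0) => e _; exact: ltey.
- move=> e [e0 r0e1]; apply: integral_pinfty_tfae => //; first by rewrite ltrDl.
  move=> r /andP[r0r rr0e]; apply: hr; rewrite lte_fin r0r /=.
  by apply: lt_trans r0e1; rewrite lte_fin.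
Unshelve. all: by end_near.
Qed.

Lemma int_left_infty_tfae (r0 r1 : R) : 0 <= r0 -> r0 < r1 ->
  (forall r, r0 < r < r1 -> pos_continuous_at r) ->
  [<-> int_left_infty (fun r => (bfun n F G r)^-1) r1;
       int_left_infty (afun n F G) r1;
       int_left_infty (fun r => Num.sqrt (afun n F G r / bfun n F G r)) r1].
Proof.
move=> r00 r01 hr; apply: (filter_tfae3 (fun e => 0 < e /\ e < r1 - r0)).
- near=> e; split; first by near: e; exact: nbhs_right_gt.
  by near: e; apply: nbhs_right_lt; rewrite subr_gt0.
- move=> e [e0 er01]; have r0e : r0 < r1 - e by rewrite ltrBrDl -ltrBrDr.
  apply: integral_pinfty_tfae.
  + exact: le_lt_trans r0e.
  + by rewrite ltrBlDr ltrDl.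
  + by move=> r /andP[r1er rr1]; apply: hr; rewrite rr1 (lt_trans r0e).
Unshelve. all: by end_near.
Qed.

End radial_integrals.

Theorem lemma5p4 (R : realType) (n : nat) (F G : R -> R)
    (rm : R) (rp : \bar R) :
  (0 < n)%N ->
  0 <= rm -> (rm%:E < rp)%E ->
  (forall r : R, (rm%:E < r%:E < rp)%E -> {for r, continuous F}) ->
  (forall r : R, (rm%:E < r%:E < rp)%E -> {for r, continuous G}) ->
  (forall r : R, (rm%:E < r%:E < rp)%E -> 0 < F r /\ 0 < G r) ->
  (0 < rm ->
     [<-> int_right_infty (fun r => (bfun n F G r)^-1) rm;
          int_right_infty (afun n F G) rm;
          int_right_infty (fun r => Num.sqrt (afun n F G r / bfun n F G r)) rm])
  /\
  ((rp < +oo)%E ->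
     [<-> int_left_infty (fun r => (bfun n F G r)^-1) (fine rp);
          int_left_infty (afun n F G) (fine rp);
          int_left_infty (fun r => Num.sqrt (afun n F G r / bfun n F G r)) (fine rp)]).
Proof.
move=> _ rm0 rmrp cF cG FG0.
have hr r : (rm%:E < r%:E < rp)%E -> pos_continuous_at F G r.
  by move=> hr; have [F0 G0] := FG0 r hr; split; [| |exact: cF|exact: cG].
split=> [rm_gt0|]; first exact: int_right_infty_tfae rm_gt0 rmrp hr.
case: rp rmrp hr {cF cG FG0} => [p||] //= rmp hr _.
apply: int_left_infty_tfae rm0 _ _; first by rewrite -lte_fin.
by move=> r rmrp; apply: hr; rewrite !lte_fin.
Qed.
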